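(* Let $1\le s\le n$, $0<\gamma<1$, and let $\mathbf{A}\in\mathbb{R}^{m\times n}$ satisfy $\inf\{\|\mathbf{A}\mathbf{v}\|_2:\mathbf{v}\in S_\gamma\}\ge\eta$ for some $\eta>0$. Let $\mathbf{x}\in\mathbb{R}^n$, $\mathbf{y}=\mathbf{A}\mathbf{x}+\mathbf{e}$ with $\|\mathbf{e}\|_2\le\epsilon$, and let $\widehat{\mathbf{x}}$ be a minimizer of $\|\mathbf{z}\|_1$ over $\mathbf{z}\in\mathbb{R}^n$ subject to $\|\mathbf{y}-\mathbf{A}\mathbf{z}\|_2\le\epsilon$. Then \[ \|\widehat{\mathbf{x}}-\mathbf{x}\|_2\ \le\ \frac{2\gamma+2}{1-\gamma}\,\sigma_s(\mathbf{x})+\frac{2\epsilon}{\eta}. \]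
   Context: $S_\gamma:=\{\mathbf{v}\in\mathbb{R}^n:\|\mathbf{v}\|_2=1,\ \|\mathbf{v}_T\|_1\ge\gamma\|\mathbf{v}_{T^c}\|_1\text{ for some }T\subset[n],|T|\le s\}$, where $\mathbf{v}_T$ agrees with $\mathbf{v}$ on $T$ and is $0$ elsewhere. $\sigma_s(\mathbf{x}):=\inf\{\|\mathbf{x}-\mathbf{v}\|_1:\mathbf{v}\text{ has at most }s\text{ nonzero entries}\}$. *)

From HB Require Import structures.
From mathcomp Require Import all_boot all_order all_algebra.
From mathcomp Require Import classical_sets reals.
Set Implicit Arguments. Unset Strict Implicit. Unset Printing Implicit Defensive.
Import Order.TTheory GRing.Theory Num.Theory.
Local Open Scope ring_scope.

Section Defs.
Variable R : realType.

Definition l1norm n (v : 'cV[R]_n) : R := \sum_(i < n) `|v i 0|.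
Definition l2norm n (v : 'cV[R]_n) : R := Num.sqrt (\sum_(i < n) (v i 0) ^+ 2).
Definition restr n (T : {set 'I_n}) (v : 'cV[R]_n) : 'cV[R]_n :=
  \col_i (if i \in T then v i 0 else 0).
Definition supp n (v : 'cV[R]_n) : {set 'I_n} := [set i | v i 0 != 0].
Definition sparse n (s : nat) (v : 'cV[R]_n) : Prop := (#|supp v| <= s)%N.
Definition S_gamma n (s : nat) (gamma : R) (v : 'cV[R]_n) : Prop :=
  l2norm v = 1 /\
  exists T : {set 'I_n}, (#|T| <= s)%N /\ l1norm (restr T v) >= gamma * l1norm (restr (~: T) v).
Definition sigma_s n (s : nat) (x : 'cV[R]_n) : R :=
  inf [set l1norm (x - (v : 'cV[R]_n)) | v in [set v : 'cV[R]_n | sparse s v]]%classic.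
End Defs.

(* Let h := xhat - x and let T be the support of an s-sparse vector v.  Since
   ||x + h||_1 <= ||x||_1, the error satisfies the cone condition
   ||h_{T^c}||_1 <= ||h_T||_1 + 2 ||x_{T^c}||_1, and ||x_{T^c}||_1 <= ||x - v||_1.
   Either gamma ||h_{T^c}||_1 <= ||h_T||_1, and then h / ||h||_2 lies in S_gamma,
   so eta ||h||_2 <= ||A h||_2 <= 2 eps; or ||h_T||_1 < gamma ||h_{T^c}||_1, and
   the cone condition gives ||h||_2 <= ||h||_1 <= (2 gamma + 2) / (1 - gamma)
   ||x - v||_1.  Taking the infimum over v yields sigma_s(x). *)
From HB Require Import structures.
From mathcomp Require Import all_boot all_order all_algebra.
From mathcomp Require Import classical_sets reals.
From mathcomp Require Import ring lra.
Set Implicit Arguments. Unset Strict Implicit. Unset Printing Implicit Defensive.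
Import Order.TTheory GRing.Theory Num.Theory.
Local Open Scope ring_scope.

Section Norms.
Variables (R : realType) (n : nat).
Implicit Types (u v x h : 'cV[R]_n) (T : {set 'I_n}).

Lemma sum_sqr_le_sqr_sum (I : Type) (r : seq I) (F : I -> R) :
  (forall i, 0 <= F i) -> \sum_(i <- r) F i ^+ 2 <= (\sum_(i <- r) F i) ^+ 2.
Proof.
move=> F_ge0; elim: r => [|a r IHr]; first by rewrite !big_nil expr0n.
rewrite !big_cons.
have sum_ge0 : 0 <= \sum_(i <- r) F i by apply: sumr_ge0.
have := F_ge0 a; nra.
Qed.

(* Lagrange's identity: the defect is half the sum of all (a_i b_j - a_j b_i)^2. *)
Lemma cauchy_schwarz (a b : 'I_n -> R) :
  (\sum_i a i * b i) ^+ 2 <= (\sum_i a i ^+ 2) * (\sum_i b i ^+ 2).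
Proof.
set Sa := \sum_i a i ^+ 2; set Sb := \sum_i b i ^+ 2; set Sab := \sum_i a i * b i.
have lagrange : \sum_i \sum_j (a i * b j - a j * b i) ^+ 2 = 2 * (Sa * Sb) - 2 * Sab ^+ 2.
  have row_sum i : \sum_j (a i * b j - a j * b i) ^+ 2 =
      a i ^+ 2 * Sb + b i ^+ 2 * Sa - 2 * (a i * b i * Sab).
    have sqr_expand j : (a i * b j - a j * b i) ^+ 2 =
        a i ^+ 2 * b j ^+ 2 + b i ^+ 2 * a j ^+ 2 - 2 * (a i * b i * (a j * b j)).
      by ring.
    under eq_bigr do rewrite sqr_expand.
    by rewrite sumrB big_split /= !mulr_sumr.
  under eq_bigr do rewrite row_sum.
  rewrite sumrB big_split /= -!mulr_suml -/Sa -/Sb -mulr_sumr -mulr_suml -/Sab; ring.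
have : 0 <= \sum_i \sum_j (a i * b j - a j * b i) ^+ 2.
  by apply: sumr_ge0 => i _; apply: sumr_ge0 => j _; apply: sqr_ge0.
rewrite lagrange; lra.
Qed.

Lemma l2norm_ge0 v : 0 <= l2norm v.
Proof. exact: sqrtr_ge0. Qed.

Lemma l2normZ (c : R) v : l2norm (c *: v) = `|c| * l2norm v.
Proof.
rewrite /l2norm -sqrtr_sqr -sqrtrM ?sqr_ge0 // mulr_sumr.
by congr Num.sqrt; apply: eq_bigr => i _; rewrite mxE exprMn.
Qed.

Lemma l2normN v : l2norm (- v) = l2norm v.
Proof. by rewrite -scaleN1r l2normZ normrN normr1 mul1r. Qed.

Lemma l2normD u v : l2norm (u + v) <= l2norm u + l2norm v.
Proof.
have norms_ge0 : 0 <= l2norm u + l2norm v by rewrite addr_ge0 ?l2norm_ge0.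
rewrite -[leRHS](ger0_norm norms_ge0) -sqrtr_sqr /l2norm ler_sqrt ?sqr_ge0 //.
set Su := \sum_i u i 0 ^+ 2; set Sv := \sum_i v i 0 ^+ 2.
have Su_ge0 : 0 <= Su by apply: sumr_ge0 => i _; apply: sqr_ge0.
have Sv_ge0 : 0 <= Sv by apply: sumr_ge0 => i _; apply: sqr_ge0.
have -> : \sum_i (u + v) i 0 ^+ 2 = Su + Sv + 2 * \sum_i u i 0 * v i 0.
  rewrite /Su /Sv mulr_sumr -!big_split /=; apply: eq_bigr => i _; rewrite mxE; ring.
have dot_le : \sum_i u i 0 * v i 0 <= Num.sqrt Su * Num.sqrt Sv.
  rewrite -sqrtrM //; apply: le_trans (ler_norm _) _.
  by rewrite -sqrtr_sqr ler_sqrt ?mulr_ge0 // cauchy_schwarz.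
have := sqr_sqrtr Su_ge0; have := sqr_sqrtr Sv_ge0.
have := sqrtr_ge0 Su; have := sqrtr_ge0 Sv.
nra.
Qed.

Lemma l2norm_le_l1norm v : l2norm v <= l1norm v.
Proof.
have l1_ge0 : 0 <= l1norm v by apply: sumr_ge0.
rewrite -[leRHS](ger0_norm l1_ge0) -sqrtr_sqr /l2norm ler_sqrt ?sqr_ge0 //.
rewrite (eq_bigr (fun i => `|v i 0| ^+ 2)) => [|i _]; last by rewrite real_normK ?num_real.
exact: sum_sqr_le_sqr_sum.
Qed.

Lemma l1norm_ge0 v : 0 <= l1norm v.
Proof. by apply: sumr_ge0. Qed.

Lemma l1norm_restr T v :
  l1norm (restr T v) = \sum_i (if i \in T then `|v i 0| else 0).
Proof. by apply: eq_bigr => i _; rewrite mxE; case: (i \in T); rewrite ?normr0. Qed.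

Lemma l1norm_restrC T v :
  l1norm v = l1norm (restr T v) + l1norm (restr (~: T) v).
Proof.
rewrite !l1norm_restr -big_split; apply: eq_bigr => i _; rewrite finset.in_setC.
by case: (i \in T) => /=; rewrite ?addr0 ?add0r.
Qed.

Lemma l1norm_restrZ T (c : R) v :
  l1norm (restr T (c *: v)) = `|c| * l1norm (restr T v).
Proof.
rewrite !l1norm_restr mulr_sumr; apply: eq_bigr => i _; rewrite mxE normrM.
by case: (i \in T); rewrite ?mulr0.
Qed.

Lemma l1norm_restr_suppC_le x v :
  l1norm (restr (~: supp v) x) <= l1norm (x - v).
Proof.
rewrite l1norm_restr; apply: ler_sum => i _.
case: ifPn => [|_]; last exact: normr_ge0.
by rewrite !inE negbK => /eqP vi0; rewrite !mxE vi0 subr0.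
Qed.

Lemma l1norm_cone T x h : l1norm (x + h) <= l1norm x ->
  l1norm (restr (~: T) h) <= l1norm (restr T h) + 2 * l1norm (restr (~: T) x).
Proof.
move=> descent.
have reverse_triangle : l1norm (restr T x) - l1norm (restr T h)
    + l1norm (restr (~: T) h) - l1norm (restr (~: T) x) <= l1norm (x + h).
  rewrite !l1norm_restr -!sumrB -big_split -sumrB /=; apply: ler_sum => i _.
  rewrite finset.in_setC; case: (i \in T) => /=.
  - by rewrite mxE addr0 subr0; exact: lerB_normD.
  - by rewrite mxE subrr add0r addrC; exact: lerB_normD.
have := l1norm_restrC T x; lra.
Qed.

Lemma sparse0 s : sparse s (0 : 'cV[R]_n).
Proof.
rewrite /sparse /supp (_ : [set i | _] = finset.set0) ?cards0 //.
by apply/setP => i; rewrite !inE mxE eqxx.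
Qed.

Lemma sigma_s_ge s x (a : R) :
  (forall v, sparse s v -> a <= l1norm (x - v)) -> a <= sigma_s s x.
Proof.
move=> le_a; apply: lb_le_inf; first by exists (l1norm (x - 0)), 0 => //; apply: sparse0.
by move=> _ [v sv <-]; apply: le_a.
Qed.

End Norms.

Lemma l1_cone_bound (R : realFieldType) (gamma a b q : R) :
  0 <= gamma -> gamma < 1 -> a < gamma * b -> b <= a + 2 * q ->
  a + b <= (2 * gamma + 2) / (1 - gamma) * q.
Proof.
move=> gamma_ge0 gamma_lt1 a_lt b_le.
rewrite mulrAC ler_pdivlMr ?subr_gt0 //.
have tail_bound : (1 - gamma) * b <= 2 * q by lra.
nra.
Qed.

Section RobustNullSpace.
Variables (R : realType) (m n s : nat) (gamma eta : R) (A : 'M[R]_(m, n)).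
Hypothesis A_bounded_below :
  forall v : 'cV[R]_n, S_gamma s gamma v -> eta <= l2norm (A *m v).

Lemma l2norm_mul_ge (T : {set 'I_n}) (h : 'cV[R]_n) : (#|T| <= s)%N ->
  gamma * l1norm (restr (~: T) h) <= l1norm (restr T h) ->
  eta * l2norm h <= l2norm (A *m h).
Proof.
move=> card_T h_in_cone.
have [->|h_neq0] := eqVneq (l2norm h) 0; first by rewrite mulr0 l2norm_ge0.
have h_gt0 : 0 < l2norm h by rewrite lt_def h_neq0 l2norm_ge0.
set c := (l2norm h)^-1; have c_gt0 : 0 < c by rewrite invr_gt0.
have normalized_in_S : S_gamma s gamma (c *: h).
  split; first by rewrite l2normZ gtr0_norm // mulVf.
  exists T; split => //.
  by rewrite !l1norm_restrZ gtr0_norm // mulrCA ler_pM2l.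
have := A_bounded_below normalized_in_S.
by rewrite -scalemxAr l2normZ gtr0_norm // ler_pdivlMl // mulrC.
Qed.

Lemma l2norm_le_of_l1_descent (x h v : 'cV[R]_n) (delta : R) :
  0 < gamma -> gamma < 1 -> 0 < eta ->
  l1norm (x + h) <= l1norm x -> l2norm (A *m h) <= delta -> sparse s v ->
  l2norm h <= (2 * gamma + 2) / (1 - gamma) * l1norm (x - v) + delta / eta.
Proof.
move=> gamma_gt0 gamma_lt1 eta_gt0 descent Ah_le sparse_v.
have C_ge0 : 0 <= (2 * gamma + 2) / (1 - gamma) by apply: divr_ge0; lra.
have delta_ge0 : 0 <= delta / eta.
  by apply: divr_ge0 (ltW eta_gt0); apply: le_trans Ah_le; apply: l2norm_ge0.
move: sparse_v (l1norm_restr_suppC_le x v); rewrite /sparse.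
move: (supp v) => T card_T tail_le.
have cone := l1norm_cone T descent.
case: (lerP (gamma * l1norm (restr (~: T) h)) (l1norm (restr T h))) => [in_S|off_S].
- have : eta * l2norm h <= delta := le_trans (l2norm_mul_ge card_T in_S) Ah_le.
  rewrite -ler_pdivlMl // mulrC => h_le.
  by apply: le_trans h_le _; rewrite lerDr mulr_ge0 ?l1norm_ge0.
- have := l2norm_le_l1norm h; rewrite (l1norm_restrC T h).
  have := l1_cone_bound (ltW gamma_gt0) gamma_lt1 off_S cone.
  have := ler_wpM2l C_ge0 tail_le.
  lra.
Qed.

End RobustNullSpace.

Lemma l2norm_mul_sub_le (R : realType) (m n : nat) (A : 'M[R]_(m, n))
    (y : 'cV[R]_m) (x z : 'cV[R]_n) (eps : R) :
  l2norm (y - A *m x) <= eps -> l2norm (y - A *m z) <= eps ->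
  l2norm (A *m (z - x)) <= 2 * eps.
Proof.
move=> x_feasible z_feasible.
have -> : A *m (z - x) = (y - A *m x) + - (y - A *m z).
  by rewrite mulmxBr opprB [RHS]addrC addrA subrK.
apply: le_trans (l2normD _ _) _; rewrite l2normN; lra.
Qed.

Theorem theorem4p10 (R : realType) (m n s : nat) (gamma eta eps : R)
  (A : 'M[R]_(m, n)) (x xhat : 'cV[R]_n) (e : 'cV[R]_m) :
  (1 <= s)%N -> (s <= n)%N -> 0 < gamma -> gamma < 1 -> 0 < eta ->
  (* inf { ||A v||_2 : v in S_gamma } >= eta *)
  (forall v : 'cV[R]_n, S_gamma s gamma v -> eta <= l2norm (A *m v)) ->
  l2norm e <= eps ->
  let y := A *m x + e in
  (* xhat minimizes ||z||_1 subject to ||y - A z||_2 <= eps *)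
  l2norm (y - A *m xhat) <= eps ->
  (forall z : 'cV[R]_n, l2norm (y - A *m z) <= eps -> l1norm xhat <= l1norm z) ->
  l2norm (xhat - x) <= (2 * gamma + 2) / (1 - gamma) * sigma_s s x + 2 * eps / eta.
Proof.
(* The bound holds for every s. *)
move=> _ _ gamma_gt0 gamma_lt1 eta_gt0 A_bounded_below e_le y xhat_feasible xhat_min.
have x_feasible : l2norm (y - A *m x) <= eps by rewrite /y addrC addKr.
have descent : l1norm (x + (xhat - x)) <= l1norm x.
  by rewrite addrC subrK; apply: xhat_min.
have Ah_le := l2norm_mul_sub_le x_feasible xhat_feasible.
set C := (2 * gamma + 2) / (1 - gamma).
have C_gt0 : 0 < C by rewrite divr_gt0 //; lra.
suff : (l2norm (xhat - x) - 2 * eps / eta) / C <= sigma_s s x.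
  by rewrite ler_pdivrMr // => ?; lra.
apply: sigma_s_ge => v sparse_v; rewrite ler_pdivrMr //.
have := l2norm_le_of_l1_descent A_bounded_below gamma_gt0 gamma_lt1 eta_gt0 descent Ah_le sparse_v.
rewrite -/C; lra.
Qed.
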